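(* In the discrete setting of the context, let $\varphi$ be a twice continuously differentiable convex function on $(0,+\infty)$, let $(\rho_K^n)$ be positive, and let the normal face velocities be $u_{K,\sigma}^n={\boldsymbol u}_\sigma^n\cdot{\boldsymbol n}_{K,\sigma}$ for a discrete face velocity field $({\boldsymbol u}_\sigma^n)$. For $K\in\mathcal M$, $0\le n\le N-1$, let $\tilde\rho_K^{n+1/2}\in|\hspace{-0.12em}[\rho_K^n,\rho_K^{n+1}]\hspace{-0.12em}|$ satisfy $\varphi'(\rho_K^{n+1})-\varphi'(\rho_K^n)=\varphi''(\tilde\rho_K^{n+1/2})(\rho_K^{n+1}-\rho_K^n)$, and define \[ |K|\,(R_{01})_K^{n+1}=\varphi''(\tilde\rho_K^{n+1/2})(\rho_K^{n+1}-\rho_K^n)\,\rho_K^n\sum_{\sigma\in\mathcal{E}(K)}|\sigma|\,u_{K,\sigma}^n. \] Let $M>1$ and suppose $\rho_K^n\le M$ and $1/\rho_K^n\le M$ for all $K$ and $0\le n\le N$; let $|\varphi''|_\infty$ be the maximum of $\varphi''$ on $[1/M,M]$. Then for any $p\ge1$, $q\ge1$ with $1/p+1/q=1$, \[ \|R_{01}\|_{L^1}\le C\,C_{\mathcal M}\,M^{(2p-1)/p}\,|\varphi''|_\infty\,\|\rho\|_{t,BV}^{1/p}\,\|{\boldsymbol u}\|_{L^q(0,T;W^{1,q}_{\mathcal M})}\,\delta t^{1/p}, \] where $C>0$ depends only on the maximal number of faces of the mesh cells.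
   Context: Setting: $\Omega\subset\mathbb{R}^d$ bounded, $\mathcal M$ a polytopal mesh with cells $K$ (with a bounded number of faces), faces of $K$ denoted $\mathcal E(K)$, measures $|K|$, $|\sigma|$, $h_K={\rm diam}(K)$, ${\boldsymbol n}_{K,\sigma}$ the unit normal to $\sigma$ outward $K$; uniform time step $\delta t$, $0\le n\le N$. Notation $|\hspace{-0.12em}[a,b]\hspace{-0.12em}|=[\min(a,b),\max(a,b)]$. $\|R\|_{L^1}=\sum_{n=0}^{N-1}\delta t\sum_K|K|\,|R_K^{n+1}|$. $\|z\|_{t,BV}=\sum_n\sum_K|K|\,|z_K^{n+1}-z_K^n|$. For a face velocity field with components $u_{\sigma,i}^n$, \[ \|{\boldsymbol u}\|^q_{L^q(0,T;W^{1,q}_{\mathcal M})}=\sum_{i=1}^d\sum_{n=0}^N\delta t\sum_{K\in\mathcal M}\sum_{(\sigma,\sigma')\in\mathcal{E}(K)^2}|K|\Bigl|\frac{u_{\sigma,i}^n-u_{\sigma',i}^n}{h_K}\Bigr|^q, \] and $C_{\mathcal M}=\max_{K\in\mathcal M,(\sigma,\sigma')\in\mathcal{E}(K)^2}\frac{(|\sigma|+|\sigma'|)h_K}{|K|}$. *)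

From HB Require Import structures.
From mathcomp Require Import all_boot all_order all_algebra.
From mathcomp Require Import all_classical all_reals all_analysis.
Set Implicit Arguments. Unset Strict Implicit. Unset Printing Implicit Defensive.
Import Order.TTheory GRing.Theory Num.Theory.
Import numFieldNormedType.Exports.
Local Open Scope ring_scope.

(* The geometric
   closure identity  sum_{sigma in E(K)} |sigma| n_{K,sigma} = 0  (divergence
   theorem for a polytope) is recorded as an axiom of the structure. *)
Record mesh (R : realType) (d : nat) := Mesh {
  cell : finType;
  face : finType;
  faces : cell -> {set face};
  vol : cell -> R;
  area : face -> R;
  diam : cell -> R;
  nrm : cell -> face -> 'I_d -> R;
  vol_gt0 : forall K, 0 < vol K;
  area_gt0 : forall s, 0 < area s;
  diam_gt0 : forall K, 0 < diam K;
  nrm_unit : forall K s, s \in faces K -> \sum_(i < d) nrm K s i ^+ 2 = 1;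
  nrm_closed : forall K (i : 'I_d),
      \sum_(s in faces K) area s * nrm K s i = 0
}.

Section Defs.
Variables (R : realType) (d : nat) (Ms : mesh R d).

Definition unorm (u : face Ms -> 'I_d -> R) (K : cell Ms) (s : face Ms) : R :=
  \sum_(i < d) u s i * nrm K s i.

Definition C_mesh : R :=
  \big[Num.max/0]_(K : cell Ms)
    \big[Num.max/0]_(s in faces K)
      \big[Num.max/0]_(s' in faces K)
        ((area s + area s') * diam K / vol K).

(* ||R||_{L^1} = sum_{n=0}^{N-1} dt sum_K |K| |R_K^{n+1}| ; Rf n K = R_K^{n+1} *)
Definition L1norm (N : nat) (dt : R) (Rf : nat -> cell Ms -> R) : R :=
  \sum_(n < N) dt * \sum_(K : cell Ms) vol K * `|Rf n K|.

Definition tBV (N : nat) (z : nat -> cell Ms -> R) : R :=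
  \sum_(n < N) \sum_(K : cell Ms) vol K * `|z n.+1 K - z n K|.

Definition W1q_norm (N : nat) (dt q : R) (u : nat -> face Ms -> 'I_d -> R) : R :=
  (\sum_(i < d) \sum_(n < N.+1) dt * \sum_(K : cell Ms)
      \sum_(s in faces K) \sum_(s' in faces K)
        vol K * (`|(u n s i - u n s' i) / diam K| `^ q)) `^ (1 / q).

(* (R_01)_K^{n+1}, defined by
   |K| (R_01)_K^{n+1} = phi''(rt_K^{n+1/2}) (rho_K^{n+1}-rho_K^n) rho_K^n
                           sum_{sigma in E(K)} |sigma| u_{K,sigma}^n ;
   R01 n K stands for (R_01)_K^{n+1}, rt n K for rt_K^{n+1/2}. *)
Definition R01 (phi2 : R -> R) (rho rt : nat -> cell Ms -> R)
    (u : nat -> face Ms -> 'I_d -> R) (n : nat) (K : cell Ms) : R :=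
  phi2 (rt n K) * (rho n.+1 K - rho n K) * rho n K *
    (\sum_(s in faces K) area s * unorm (u n) K s) / vol K.

End Defs.

Definition convex_pos (R : realType) (phi : R -> R) : Prop :=
  forall x y t : R, 0 < x -> 0 < y -> 0 <= t <= 1 ->
    phi (t * x + (1 - t) * y) <= t * phi x + (1 - t) * phi y.

Definition C2_pos (R : realType) (phi : R -> R) : Prop :=
  forall x : R, 0 < x ->
    [/\ derivable phi x 1, derivable (derive1 phi) x 1
      & {for x, continuous (derive1 (derive1 phi))}].

(* |phi''|_oo = max of phi'' on [1/M, M] (sup of the image of a compact set) *)
Definition sup_phi2 (R : realType) (phi : R -> R) (M : R) : R :=
  sup [set derive1 (derive1 phi) x | x in [set x : R | M^-1 <= x <= M]]%classic.

From HB Require Import structures.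
From mathcomp Require Import all_boot all_order all_algebra.
From mathcomp Require Import all_classical all_reals all_analysis.
From mathcomp Require Import ring lra.
Set Implicit Arguments. Unset Strict Implicit. Unset Printing Implicit Defensive.
Import Order.TTheory GRing.Theory Num.Theory.
Import numFieldNormedType.Exports.
Local Open Scope ring_scope.

(* By the closure relation
   sum_sigma |sigma| n_{K,sigma} = 0 the flux only sees the differences
   u_sigma - u_sigma0 inside the cell, and |sigma| <= C_M |K| / h_K turns it into
   C_M |K| times a discrete gradient of u.  Convexity makes phi'' >= 0, so it is
   bounded by its maximum on [1/M, M], and rho^n <= M.  A weighted Hoelder
   inequality over (component, time, cell, face, face) then splits the time jumps
   of rho from the gradient of u; the jumps are raised to the power p only after
   using |rho^{n+1} - rho^n|^p <= M^{p-1} |rho^{n+1} - rho^n|, which is where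
   M^{(p-1)/p} and the BV norm come from. *)

Section SecondDerivative.
Variable R : realType.
Implicit Types (f : R -> R) (a b x : R).

Lemma midpoint_gt_of_derive1_decr f a b : a < b ->
  {in `[a, b], forall x, derivable f x 1} ->
  {in `[a, b] &, {homo derive1 f : x y /~ x < y}} ->
  f a + f b < 2 * f ((a + b) / 2).
Proof.
move=> ab df decr; set m := (a + b) / 2.
have [am mb] : a < m /\ m < b by split; rewrite /m; lra.
have mvt c d : a <= c -> c < d -> d <= b ->
    exists2 e, e \in `]c, d[ & f d - f c = derive1 f e * (d - c).
  move=> ac cd db; apply: MVT => // [x|].
    rewrite in_itv /= => /andP[cx xd]; rewrite derive1E; apply/derivableP.
    by apply: df; rewrite in_itv /=; apply/andP; split; lra.
  apply: derivable_within_continuous => x; rewrite in_itv /= => /andP[cx xd].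
  by apply: df; rewrite in_itv /=; apply/andP; split; lra.
have [c1 + E1] := mvt a m (lexx a) am (ltW mb).
have [c2 + E2] := mvt m b (ltW am) mb (lexx b).
rewrite !in_itv /= => /andP[mc2 c2b] /andP[ac1 c1m].
have : derive1 f c2 < derive1 f c1.
  by apply: decr; rewrite ?in_itv /=; [apply/andP; split; lra ..| lra].
have hm : b - m = m - a by rewrite /m; field.
rewrite hm in E2; have : 0 < m - a by lra.
nra.
Qed.

Lemma convex_pos_derive2_ge0 (phi : R -> R) x : C2_pos phi -> convex_pos phi ->
  0 < x -> 0 <= derive1 (derive1 phi) x.
Proof.
move=> C2phi cvx x0; rewrite leNgt; apply/negP => neg.
have [_ _ cont] := C2phi x x0.
have d1 y : 0 < y -> derivable phi y 1 by case/C2phi.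
have d2 y : 0 < y -> derivable (derive1 phi) y 1 by case/C2phi.
have := cvgr_lt _ cont _ neg; rewrite -nbhs_ballE => -[e /= e0 He].
pose r := Num.min e x / 2.
have [r0 re rx] : [/\ 0 < r, r < e & r < x].
  have mine : Num.min e x <= e by rewrite ge_min lexx.
  have minx : Num.min e x <= x by rewrite ge_min lexx orbT.
  have min0 : 0 < Num.min e x by rewrite lt_min e0 x0.
  by rewrite /r; split; lra.
have decr : {in `[x - r, x + r] &, {homo derive1 phi : y z /~ y < z}}.
  apply: ltr0_derive1_lt_cc.
  - by move=> y; rewrite in_itv /= => /andP[y1 _]; apply: d2; lra.
  - move=> y; rewrite in_itv /= => /andP[y1 y2]; apply: He; rewrite /ball /=.
    by rewrite ltr_norml; apply/andP; split; lra.
  - apply: derivable_within_continuous => y; rewrite in_itv /= => /andP[y1 _].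
    by apply: d2; lra.
have := midpoint_gt_of_derive1_decr (ltac:(lra) : x - r < x + r) _ decr.
have -> : (x - r + (x + r)) / 2 = x by field.
have := cvx (x - r) (x + r) (2^-1) ltac:(lra) ltac:(lra) ltac:(lra).
have -> : 2^-1 * (x - r) + (1 - 2^-1) * (x + r) = x by field.
move=> h1 h2; have : phi (x - r) + phi (x + r) < 2 * phi x.
  by apply: h2 => y; rewrite in_itv /= => /andP[y1 _]; apply: d1; lra.
lra.
Qed.

Lemma norm_derive2_le_sup_phi2 (phi : R -> R) (M x : R) :
  C2_pos phi -> convex_pos phi -> 1 < M -> M^-1 <= x <= M ->
  `|derive1 (derive1 phi) x| <= sup_phi2 phi M.
Proof.
move=> C2phi cvx M1 /andP[xl xr].
have iM0 : 0 < M^-1 by rewrite invr_gt0; lra.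
rewrite ger0_norm; last by apply: convex_pos_derive2_ge0 => //; lra.
have cont : {within `[M^-1, M], continuous derive1 (derive1 phi)}%classic.
  apply: continuous_in_subspaceT => y; rewrite inE /= in_itv /= => /andP[y0 _].
  by have [] := C2phi y (lt_le_trans iM0 y0).
have [c _ cmax] := EVT_max (le_trans xl xr) cont.
apply: ub_le_sup; last by exists x => //; apply/andP.
exists (derive1 (derive1 phi) c) => _ [y /= /andP[yl yr] <-].
by apply: cmax; rewrite in_itv /= yl yr.
Qed.

End SecondDerivative.

Lemma powRV (R : realType) (x r : R) : 0 <= x -> x^-1 `^ r = (x `^ r)^-1.
Proof.
by move=> x0; rewrite -powR_inv1 // -powRrM mulrC powRrM powR_inv1 ?powR_ge0.
Qed.

Lemma natr_powR_le_succ (R : realType) (n : nat) (r : R) : 0 <= r <= 1 ->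
  n%:R `^ r <= n.+1%:R.
Proof.
move=> /andP[r0 r1]; apply: (le_trans _ (ler1_powR _ r1)); last by rewrite ler1n.
by apply: ge0_ler_powR; rewrite ?nnegrE ?ler0n ?ler_nat.
Qed.

Section WeightedHoelder.
Variables (R : realType) (I : finType) (w : I -> R).
Hypothesis w_ge0 : forall i, 0 <= w i.

Lemma weighted_sum_powR_eq0 (c : I -> R) r : \sum_i w i * c i `^ r = 0 ->
  forall i, w i * c i = 0.
Proof.
move=> /eqP; rewrite psumr_eq0 => [/allP eq0 i|i _]; last first.
  by rewrite mulr_ge0 ?powR_ge0.
move: (eq0 i (mem_index_enum i)); rewrite /= mulf_eq0 powR_eq0.
by case/orP => [/eqP->|/andP[/eqP-> _]]; rewrite ?mul0r ?mulr0.
Qed.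

Variables (a b : I -> R) (p q : R).
Hypotheses (a_ge0 : forall i, 0 <= a i) (b_ge0 : forall i, 0 <= b i).
Hypotheses (p_gt0 : 0 < p) (q_gt0 : 0 < q) (pq : p^-1 + q^-1 = 1).

Lemma hoelder_sum : \sum_i w i * a i * b i <=
  (\sum_i w i * a i `^ p) `^ p^-1 * (\sum_i w i * b i `^ q) `^ q^-1.
Proof.
set A := \sum_i w i * a i `^ p; set B := \sum_i w i * b i `^ q.
have sum_ge0 (c : I -> R) r : 0 <= \sum_i w i * c i `^ r.
  by apply: sumr_ge0 => i _; rewrite mulr_ge0 ?powR_ge0.
have [A0|A0] := eqVneq A 0.
  rewrite big1 ?mulr_ge0 ?powR_ge0 // => i _.
  by rewrite (weighted_sum_powR_eq0 A0) mul0r.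
have [B0|B0] := eqVneq B 0.
  rewrite big1 ?mulr_ge0 ?powR_ge0 // => i _.
  by rewrite -mulrA mulrCA (weighted_sum_powR_eq0 B0) mulr0.
have Agt0 : 0 < A by rewrite lt0r A0 sum_ge0.
have Bgt0 : 0 < B by rewrite lt0r B0 sum_ge0.
have rootK (X r : R) : 0 < X -> 0 < r -> (X `^ r^-1) `^ r = X.
  by move=> X0 r0; rewrite -powRrM mulVf ?gt_eqF // powRr1 ?ltW.
set al := A `^ p^-1; set be := B `^ q^-1.
have alp : al `^ p = A by rewrite rootK.
have beq : be `^ q = B by rewrite rootK.
have al0 : 0 < al by rewrite powR_gt0.
have be0 : 0 < be by rewrite powR_gt0.
clearbody al be.
(* Young's inequality for the normalized sequences a / al and b / be *)
have young i : w i * a i * b i / (al * be) <=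
    w i * a i `^ p / A / p + w i * b i `^ q / B / q.
  have ial : 0 <= al^-1 by rewrite invr_ge0 ltW.
  have ibe : 0 <= be^-1 by rewrite invr_ge0 ltW.
  have := conjugate_powR (mulr_ge0 (a_ge0 i) ial) (mulr_ge0 (b_ge0 i) ibe)
    p_gt0 q_gt0 pq.
  rewrite !powRM // (powRV _ (ltW al0)) (powRV _ (ltW be0)) alp beq.
  by move/(ler_wpM2l (w_ge0 i)); congr (_ <= _); rewrite ?invfM; ring.
rewrite -[al * be]mul1r -ler_pdivrMr ?mulr_gt0 // mulr_suml.
apply: le_trans (ler_sum _ (fun i _ => young i)) _.
by rewrite big_split /= -!mulr_suml -/A -/B !mulfV ?gt_eqF // !mul1r pq.
Qed.

End WeightedHoelder.

Section MeshFlux.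
Variables (R : realType) (d : nat) (Ms : mesh R d).
Implicit Types (K : cell Ms) (s : face Ms).

Lemma C_mesh_ge0 : 0 <= C_mesh Ms.
Proof. exact: bigmax_ge_id. Qed.

Lemma le_C_mesh K s s' : s \in faces K -> s' \in faces K ->
  (area s + area s') * diam K / vol K <= C_mesh Ms.
Proof.
move=> sK s'K; apply: le_trans (le_bigmax _ _ K).
by apply: le_trans (le_bigmax_cond _ _ sK); exact: (le_bigmax_cond _ _ s'K).
Qed.

Lemma area_le_C_mesh K s s' : s \in faces K -> s' \in faces K ->
  area s <= C_mesh Ms * vol K / diam K.
Proof.
move=> sK s'K; rewrite ler_pdivlMr ?diam_gt0 // -ler_pdivrMr ?vol_gt0 //.
apply: le_trans (le_C_mesh sK s'K).
by rewrite ler_pM2r ?invr_gt0 ?vol_gt0 // ler_pM2r ?diam_gt0 // lerDl ltW ?area_gt0.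
Qed.

Lemma norm_nrm_le1 K s i : s \in faces K -> `|nrm K s i| <= 1.
Proof.
move=> sK; rewrite -(@expr_le1 _ 2) // real_normK ?num_real // -(nrm_unit sK).
by rewrite (bigD1 i) //= lerDl sumr_ge0 // => j _; rewrite sqr_ge0.
Qed.

Lemma flux_const_eq0 K (v : 'I_d -> R) :
  \sum_(s in faces K) area s * \sum_i v i * nrm K s i = 0.
Proof.
under eq_bigr do rewrite mulr_sumr.
rewrite exchange_big big1 // => i _.
under eq_bigr do rewrite mulrCA.
by rewrite -mulr_sumr nrm_closed mulr0.
Qed.

Lemma norm_flux_le K (f : face Ms -> 'I_d -> R) :
  `|\sum_(s in faces K) area s * unorm f K s| <= C_mesh Ms * vol K *
    \sum_i \sum_(s in faces K) \sum_(s' in faces K) `|(f s i - f s' i) / diam K|.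
Proof.
have CV0 : 0 <= C_mesh Ms * vol K by rewrite mulr_ge0 ?C_mesh_ge0 ?ltW ?vol_gt0.
have [s0 s0K|noface] := pickP (mem (faces K)); last first.
  rewrite big_pred0 ?normr0; last exact: noface.
  apply: mulr_ge0 => //; apply: sumr_ge0 => i _.
  by do 2!apply: sumr_ge0 => ? _.
have -> : \sum_(s in faces K) area s * unorm f K s =
    \sum_(s in faces K) area s * \sum_i (f s i - f s0 i) * nrm K s i.
  rewrite -[LHS]subr0 -[X in _ - X](flux_const_eq0 K (f s0)) -sumrB.
  apply: eq_bigr => s _; rewrite -mulrBr -sumrB.
  by congr (_ * _); apply: eq_bigr => i _; rewrite mulrBl.
have term s : s \in faces K -> `|area s * \sum_i (f s i - f s0 i) * nrm K s i| <=
    C_mesh Ms * vol K * \sum_i `|(f s i - f s0 i) / diam K|.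
  move=> sK; rewrite normrM gtr0_norm ?area_gt0 //.
  under [X in _ <= _ * X]eq_bigr do
    rewrite normrM (gtr0_norm (x := (diam K)^-1)) ?invr_gt0 ?diam_gt0 //.
  rewrite -mulr_suml [_ * (diam K)^-1]mulrC mulrA.
  apply: ler_pM (area_le_C_mesh sK s0K) _ => //; first exact: ltW (area_gt0 s).
  apply: le_trans (ler_norm_sum _ _ _) _; apply: ler_sum => i _.
  by rewrite normrM ler_piMr // norm_nrm_le1.
apply: le_trans (ler_norm_sum _ _ _) _.
apply: le_trans (ler_sum _ term) _.
rewrite -mulr_sumr ler_wpM2l // exchange_big ler_sum // => i _.
apply: ler_sum => s _.
by rewrite (bigD1 s0) //= lerDl sumr_ge0.
Qed.

End MeshFlux.

Lemma sumr_in_natr (R : pzSemiRingType) (T : finType) (A : {set T}) (G : T -> R) :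
  \sum_(s in A) G s = \sum_s (s \in A)%:R * G s.
Proof.
by rewrite big_mkcond; apply: eq_bigr => s _; case: (s \in A); rewrite ?mul1r ?mul0r.
Qed.

Section R01Estimate.
Variables (R : realType) (d Nf : nat) (Ms : mesh R d) (phi : R -> R) (N : nat).
Variables (dt M p q : R) (rho rt : nat -> cell Ms -> R) (u : nat -> face Ms -> 'I_d -> R).
Hypotheses (faces_le : forall K : cell Ms, (#|faces K| <= Nf)%N) (dt_gt0 : 0 < dt).
Hypotheses (C2phi : C2_pos phi) (cvx : convex_pos phi) (M_gt1 : 1 < M).
Hypothesis rho_gt0 : forall n K, 0 < rho n K.
Hypothesis rho_le : forall n K, (n <= N)%N -> rho n K <= M /\ (rho n K)^-1 <= M.
Hypothesis rt_between : forall n K, (n < N)%N ->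
  Num.min (rho n K) (rho n.+1 K) <= rt n K <= Num.max (rho n K) (rho n.+1 K).
Hypotheses (p_ge1 : 1 <= p) (q_ge1 : 1 <= q) (pq : p^-1 + q^-1 = 1).

Let M_gt0 : 0 < M := lt_trans ltr01 M_gt1.
Let p_gt0 : 0 < p := lt_le_trans ltr01 p_ge1.
Let q_gt0 : 0 < q := lt_le_trans ltr01 q_ge1.

Let jump n (K : cell Ms) := `|rho n.+1 K - rho n K|.
Let grad (i : 'I_d) n (K : cell Ms) (s s' : face Ms) := `|(u n s i - u n s' i) / diam K|.
(* The indicators of E(K) make all face sums run over the whole face type, so
   that Hoelder's inequality applies on a product index type. *)
Let weight (n : nat) (K : cell Ms) (s s' : face Ms) :=
  dt * vol K * (s \in faces K)%:R * (s' \in faces K)%:R.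
Let sum5 (F : 'I_d -> 'I_N -> cell Ms -> face Ms -> face Ms -> R) :=
  \sum_i \sum_n \sum_K \sum_s \sum_s' F i n K s s'.

Lemma weight_ge0 n K s s' : 0 <= weight n K s s'.
Proof. by rewrite /weight !mulr_ge0 ?ler0n ?(ltW dt_gt0) ?(ltW (vol_gt0 _)). Qed.

Lemma sum5_ge0 F : (forall i n K s s', 0 <= F i n K s s') -> 0 <= sum5 F.
Proof. by move=> F0; do 5!apply: sumr_ge0 => ? _. Qed.

Lemma rho_bounds n K : (n <= N)%N -> M^-1 <= rho n K <= M.
Proof.
move=> nN; have [-> le_invM] := rho_le K nN; rewrite andbT.
by rewrite -[rho n K]invrK lef_pV2 ?posrE ?invr_gt0 ?rho_gt0 ?M_gt0.
Qed.

Lemma rt_bounds n K : (n < N)%N -> M^-1 <= rt n K <= M.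
Proof.
move=> nN; have /andP[lo hi] := rt_between K nN.
have /andP[l0 h0] := rho_bounds K (ltnW nN).
have /andP[l1 h1] := rho_bounds K nN.
by rewrite (le_trans _ lo) ?(le_trans hi) ?le_min ?ge_max ?l0 ?l1 ?h0 ?h1.
Qed.

Lemma jump_le n K : (n < N)%N -> jump n K <= M.
Proof.
move=> nN; have /andP[_ h0] := rho_bounds K (ltnW nN).
have /andP[_ h1] := rho_bounds K nN.
have := rho_gt0 n K; have := rho_gt0 n.+1 K.
by rewrite /jump ler_norml => *; apply/andP; split; lra.
Qed.

Lemma sup_phi2_ge0 : 0 <= sup_phi2 phi M.
Proof.
apply: le_trans (normr_ge0 _) (norm_derive2_le_sup_phi2 (x := 1) C2phi cvx M_gt1 _).
by rewrite invf_le1 ?ltW //; lra.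
Qed.

Lemma R01_cell_le n K : (n < N)%N ->
  vol K * `|R01 (derive1 (derive1 phi)) rho rt u n K| <=
  sup_phi2 phi M * M * C_mesh Ms * (vol K * jump n K *
    \sum_i \sum_(s in faces K) \sum_(s' in faces K) grad i n K s s').
Proof.
move=> nN; have vol0 := vol_gt0 K.
rewrite /R01 !normrM normfV (gtr0_norm vol0) mulrCA mulfV ?gt_eqF // mulr1.
have hphi2 : `|derive1 (derive1 phi) (rt n K)| <= sup_phi2 phi M.
  exact: norm_derive2_le_sup_phi2 (rt_bounds K nN).
have hrho : `|rho n K| <= M.
  by rewrite gtr0_norm //; have /andP[] := rho_bounds K (ltnW nN).
have hflux := norm_flux_le K (u n).
apply: le_trans (_ : sup_phi2 phi M * jump n K * M * (C_mesh Ms * vol K *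
    \sum_i \sum_(s in faces K) \sum_(s' in faces K) grad i n K s s') <= _).
  by rewrite !ler_pM ?normr_ge0 ?mulr_ge0 ?sup_phi2_ge0 ?sumr_ge0.
by rewrite le_eqVlt; apply/predU1P; left; ring.
Qed.

Lemma L1norm_R01_le_sum5 :
  L1norm N dt (R01 (derive1 (derive1 phi)) rho rt u) <=
  sup_phi2 phi M * M * C_mesh Ms *
  sum5 (fun i n K s s' => weight n K s s' * jump n K * grad i n K s s').
Proof.
have -> : sum5 (fun i n K s s' => weight n K s s' * jump n K * grad i n K s s') =
    \sum_(n < N) dt * \sum_K (vol K * jump n K *
      \sum_i \sum_(s in faces K) \sum_(s' in faces K) grad i n K s s').
  rewrite /sum5 exchange_big; apply: eq_bigr => n _.
  rewrite exchange_big mulr_sumr; apply: eq_bigr => K _.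
  rewrite !mulr_sumr; apply: eq_bigr => i _.
  rewrite sumr_in_natr !mulr_sumr; apply: eq_bigr => s _.
  rewrite sumr_in_natr !mulr_sumr; apply: eq_bigr => s' _.
  by rewrite /weight; ring.
rewrite /L1norm (mulr_sumr _ _ _ (sup_phi2 phi M * M * C_mesh Ms)).
apply: ler_sum => n _.
rewrite mulrCA; apply: (ler_wpM2l (ltW dt_gt0)).
rewrite (mulr_sumr _ _ _ (sup_phi2 phi M * M * C_mesh Ms)).
apply: ler_sum => K _.
exact: R01_cell_le.
Qed.

Lemma sum5_hoelder :
  sum5 (fun i n K s s' => weight n K s s' * jump n K * grad i n K s s') <=
  sum5 (fun i n K s s' => weight n K s s' * jump n K `^ p) `^ p^-1 *
  sum5 (fun i n K s s' => weight n K s s' * grad i n K s s' `^ q) `^ q^-1.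
Proof.
rewrite /sum5 !pair_bigA /=; apply: hoelder_sum => // x; last exact: normr_ge0.
  exact: weight_ge0.
exact: normr_ge0.
Qed.

Lemma sum5_jump_le :
  sum5 (fun i n K s s' => weight n K s s' * jump n K `^ p) <=
  (Nf * Nf * d)%:R * M `^ (p - 1) * dt * tBV N rho.
Proof.
have jump_powR n K : (n < N)%N -> jump n K `^ p <= M `^ (p - 1) * jump n K.
  move=> nN; rewrite -(mulr_powRB1 (normr_ge0 _) p_gt0) mulrC.
  apply: ler_wpM2r; first exact: normr_ge0.
  by apply: ge0_ler_powR; rewrite ?subr_ge0 ?nnegrE ?normr_ge0 ?(ltW M_gt0) ?jump_le.
have card_faces K : \sum_s (s \in faces K)%:R = #|faces K|%:R :> R.
  by under eq_bigr do rewrite -[_%:R]mulr1; rewrite -sumr_in_natr sumr_const.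
have inner (n : 'I_N) K : \sum_s \sum_s' weight n K s s' * jump n K `^ p <=
    (Nf * Nf)%:R * M `^ (p - 1) * dt * (vol K * jump n K).
  have -> : \sum_s \sum_s' weight n K s s' * jump n K `^ p = dt * vol K *
      jump n K `^ p * ((\sum_s (s \in faces K)%:R) * \sum_s' (s' \in faces K)%:R).
    rewrite mulr_suml mulr_sumr; apply: eq_bigr => s _.
    by rewrite !mulr_sumr; apply: eq_bigr => s' _; rewrite /weight; ring.
  have dtvol0 : 0 <= dt * vol K by rewrite mulr_ge0 ?(ltW dt_gt0) ?(ltW (vol_gt0 K)).
  rewrite card_faces -natrM.
  apply: le_trans (_ : _ <= dt * vol K * (M `^ (p - 1) * jump n K) * (Nf * Nf)%:R) _.
    apply: ler_pM; rewrite ?ler0n ?ler_nat ?leq_mul ?faces_le //.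
      exact: mulr_ge0 dtvol0 (powR_ge0 _ _).
    by apply: ler_wpM2l => //; apply: jump_powR.
  by rewrite le_eqVlt; apply/predU1P; left; ring.
apply: le_trans (_ : _ <= \sum_(i < d) (Nf * Nf)%:R * M `^ (p - 1) * dt * tBV N rho) _.
  apply: ler_sum => i _; rewrite /tBV mulr_sumr; apply: ler_sum => n _.
  by rewrite mulr_sumr; apply: ler_sum => K _; exact: inner.
by rewrite sumr_const card_ord -mulr_natl !natrM le_eqVlt; apply/predU1P; left; ring.
Qed.

Lemma sum5_jump_root_le :
  sum5 (fun i n K s s' => weight n K s s' * jump n K `^ p) `^ p^-1 <=
  (Nf * Nf * d)%:R `^ p^-1 * M `^ ((p - 1) / p) * dt `^ p^-1 * tBV N rho `^ p^-1.
Proof.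
have T0 : 0 <= tBV N rho.
  by do 2!apply: sumr_ge0 => ? _; exact: mulr_ge0 (ltW (vol_gt0 _)) (normr_ge0 _).
have ip0 : 0 <= p^-1 by rewrite invr_ge0 ltW.
apply: le_trans (ge0_ler_powR ip0 _ _ sum5_jump_le) _; rewrite ?nnegrE.
- by apply: sum5_ge0 => *; rewrite mulr_ge0 ?weight_ge0 ?powR_ge0.
- by rewrite !mulr_ge0 ?ler0n ?powR_ge0 ?(ltW dt_gt0).
by rewrite !powRM ?mulr_ge0 ?powR_ge0 ?ler0n ?(ltW dt_gt0) // -powRrM.
Qed.

Lemma sum5_grad_le :
  sum5 (fun i n K s s' => weight n K s s' * grad i n K s s' `^ q) `^ q^-1 <=
  W1q_norm N dt q u.
Proof.
set G := sum5 _.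
have G0 : 0 <= G by apply: sum5_ge0 => *; rewrite mulr_ge0 ?weight_ge0 ?powR_ge0.
have term_ge0 i n : 0 <= dt * \sum_K \sum_(s in faces K) \sum_(s' in faces K)
    vol K * `|(u n s i - u n s' i) / diam K| `^ q.
  apply: mulr_ge0; first exact: ltW.
  do 3!apply: sumr_ge0 => ? _.
  exact: mulr_ge0 (ltW (vol_gt0 _)) (powR_ge0 _ _).
have le_W : G <= \sum_(i < d) \sum_(n < N.+1) dt * \sum_K \sum_(s in faces K)
    \sum_(s' in faces K) vol K * `|(u n s i - u n s' i) / diam K| `^ q.
  apply: ler_sum => i _; rewrite big_ord_recr /=; apply: ler_wpDr => //.
  rewrite le_eqVlt; apply/predU1P; left; apply: eq_bigr => n _.
  rewrite mulr_sumr; apply: eq_bigr => K _.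
  rewrite sumr_in_natr mulr_sumr; apply: eq_bigr => s _.
  rewrite sumr_in_natr !mulr_sumr; apply: eq_bigr => s' _.
  by rewrite /weight; ring.
rewrite /W1q_norm div1r; apply: ge0_ler_powR => //; first by rewrite invr_ge0 ltW.
by rewrite nnegrE (le_trans G0 le_W).
Qed.

Lemma L1norm_R01_le :
  L1norm N dt (R01 (derive1 (derive1 phi)) rho rt u) <=
  (Nf * Nf * d).+1%:R * C_mesh Ms * M `^ ((2 * p - 1) / p) * sup_phi2 phi M
    * tBV N rho `^ (1 / p) * W1q_norm N dt q u * dt `^ (1 / p).
Proof.
set X : R := (Nf * Nf * d)%:R; set T := tBV N rho; set W := W1q_norm N dt q u.
set S := sup_phi2 phi M; set C := C_mesh Ms.
have SMC0 : 0 <= S * M * C by rewrite !mulr_ge0 ?sup_phi2_ge0 ?C_mesh_ge0 ?(ltW M_gt0).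
have hX : X `^ p^-1 <= (Nf * Nf * d).+1%:R.
  by rewrite natr_powR_le_succ // invr_ge0 (ltW p_gt0) invf_le1.
have hM : M * M `^ ((p - 1) / p) = M `^ ((2 * p - 1) / p).
  have -> : (2 * p - 1) / p = 1 + (p - 1) / p by field; rewrite gt_eqF.
  by rewrite powRD ?(gt_eqF M_gt0) ?implybT // powRr1 // ltW.
apply: le_trans L1norm_R01_le_sum5 _.
apply: le_trans (ler_wpM2l SMC0 sum5_hoelder) _.
have hAB := ler_pM (powR_ge0 _ _) (powR_ge0 _ _) sum5_jump_root_le sum5_grad_le.
apply: le_trans (ler_wpM2l SMC0 hAB) _.
rewrite -/W !div1r -hM.
set Rest := S * C * (M * M `^ ((p - 1) / p)) * (dt `^ p^-1 * T `^ p^-1 * W).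
have Rest0 : 0 <= Rest.
  by rewrite /Rest !mulr_ge0 ?powR_ge0 ?sup_phi2_ge0 ?C_mesh_ge0 ?(ltW M_gt0).
have -> : S * M * C * (X `^ p^-1 * M `^ ((p - 1) / p) * dt `^ p^-1 * T `^ p^-1 * W)
    = X `^ p^-1 * Rest by rewrite /Rest; ring.
have -> : (Nf * Nf * d).+1%:R * C * (M * M `^ ((p - 1) / p)) * S * T `^ p^-1 * W *
    dt `^ p^-1 = (Nf * Nf * d).+1%:R * Rest by rewrite /Rest; ring.
by apply: ler_wpM2r.
Qed.

End R01Estimate.

Theorem lemma3p4 (R : realType) (d Nf : nat) :
  exists C : R, 0 < C /\
  forall (Ms : mesh R d) (phi : R -> R) (N : nat) (dt : R)
         (rho rt : nat -> cell Ms -> R) (u : nat -> face Ms -> 'I_d -> R)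
         (M p q : R),
    (forall K : cell Ms, #|faces K| <= Nf)%N ->
    0 < dt ->
    C2_pos phi -> convex_pos phi ->
    (forall n K, 0 < rho n K) ->
    (forall n K, (n < N)%N ->
       Num.min (rho n K) (rho n.+1 K) <= rt n K <= Num.max (rho n K) (rho n.+1 K)) ->
    (forall n K, (n < N)%N ->
       derive1 phi (rho n.+1 K) - derive1 phi (rho n K)
       = derive1 (derive1 phi) (rt n K) * (rho n.+1 K - rho n K)) ->
    1 < M ->
    (forall n K, (n <= N)%N -> rho n K <= M /\ (rho n K)^-1 <= M) ->
    1 <= p -> 1 <= q -> p^-1 + q^-1 = 1 ->
    L1norm N dt (R01 (derive1 (derive1 phi)) rho rt u)
    <= C * C_mesh Ms * M `^ ((2 * p - 1) / p) * sup_phi2 phi M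
         * tBV N rho `^ (1 / p) * W1q_norm N dt q u * dt `^ (1 / p).
Proof.
exists (Nf * Nf * d).+1%:R; split => // Ms phi N dt rho rt u M p q.
(* The mean-value identity is not needed: R01 is stated with phi''(rt)
   directly, so only the position of rt between rho^n and rho^{n+1} matters. *)
move=> faces_le dt_gt0 C2phi cvx rho_gt0 rt_between _ M_gt1 rho_le p_ge1 q_ge1 pq.
by apply: L1norm_R01_le.
Qed.
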